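(* Let $n\ge 0$ be an integer. Let $K$ be the complete directed graph (without self-loops) on $2n+1$ vertices, and let $R$ be any graph obtained from $K$ by deleting, for each vertex, an arbitrary set of $n$ of its incoming edges. Then at least one vertex of $R$ has at least $n$ outgoing edges in $R$. *)

From mathcomp Require Import all_boot.
Set Implicit Arguments. Unset Strict Implicit. Unset Printing Implicit Defensive.

(* A deletion pattern assigns to every vertex v the set D v of sources u of
   the deleted incoming edges u -> v; it must consist of exactly n in-neighbours
   of v in K (so v \notin D v and #|D v| = n). *)
Definition valid_deletion (n : nat) (D : 'I_(2 * n + 1) -> {set 'I_(2 * n + 1)}) :=
  forall v, v \notin D v /\ #|D v| = n.

Definition R_edge (n : nat) (D : 'I_(2 * n + 1) -> {set 'I_(2 * n + 1)})
  (u v : 'I_(2 * n + 1)) : bool := (u != v) && (u \notin D v).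

Definition outdeg (n : nat) (D : 'I_(2 * n + 1) -> {set 'I_(2 * n + 1)})
  (u : 'I_(2 * n + 1)) : nat := #|[set v | R_edge D u v]|.

From mathcomp Require Import all_boot.

(* Every vertex keeps exactly n of its 2n incoming edges, so R has (2n+1) n
   edges in total; counting them by their sources, the average out-degree is
   n, and a vertex of maximal out-degree reaches the average. *)

Lemma sum_card_out_in (T : finType) (e : rel T) :
  \sum_u #|[set v | e u v]| = \sum_v #|[set u | e u v]|.
Proof.
have card_sum (P : pred T) : #|[set x | P x]| = \sum_x (P x : nat).
  by rewrite cardsE -sum1_card big_mkcond.
under eq_bigr do rewrite card_sum.
by rewrite exchange_big; apply: eq_bigr => v _; rewrite card_sum.
Qed.

Lemma exists_ge_average (T : finType) (f : T -> nat) (m : nat) :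
  0 < #|T| -> #|T| * m <= \sum_x f x -> exists x, m <= f x.
Proof.
move=> T_gt0 avg_le_sum; have [x max_fx] := eq_bigmax f T_gt0.
exists x; rewrite -max_fx -(leq_pmul2l T_gt0).
apply: (leq_trans avg_le_sum); rewrite -sum_nat_const.
by apply: leq_sum => y _; apply: leq_bigmax.
Qed.

Lemma card_R_in (n : nat) (D : 'I_(2 * n + 1) -> {set 'I_(2 * n + 1)}) v :
  v \notin D v -> #|[set u | R_edge D u v]| = 2 * n - #|D v|.
Proof.
move=> vNDv; have -> : [set u | R_edge D u v] = ~: (v |: D v).
  by apply/setP => u; rewrite !inE negb_or.
(* Abstract #|D v| first: rewriting 2 * n + 1 would otherwise hit the type of D. *)
rewrite cardsCs setCK cardsU1 vNDv card_ord; move: #|D v| => k.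
by rewrite addn1 add1n subSS.
Qed.

Theorem corollary1 (n : nat) (D : 'I_(2 * n + 1) -> {set 'I_(2 * n + 1)}) :
  valid_deletion D -> exists u : 'I_(2 * n + 1), n <= outdeg D u.
Proof.
move=> validD; apply: exists_ge_average; first by rewrite card_ord addn1.
rewrite /outdeg sum_card_out_in -sum_nat_const.
apply/eq_leq/eq_bigr => v _; have [vNDv card_Dv] := validD v.
by rewrite card_R_in // card_Dv mul2n -addnn addnK.
Qed.
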